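(* Let $d_1,d_2,e_1,e_2\ge2$ be integers, $d=d_1+d_2$, and let $A$ be the $d\times d_1e_1d_2e_2$ matrix whose columns are the vectors $i\,\mathbf{e}_\kappa\oplus j\,\mathbf{e}_\lambda\in\mathbb{N}^{d_1}\oplus\mathbb{N}^{d_2}$ for $(\kappa,i,\lambda,j)\in[d_1]\times[e_1]\times[d_2]\times[e_2]$. Then the $d$-dimensional polytope $\mathrm{conv}(A\cup0)$ has $d+4$ facets, given by the $d+2$ inequalities $$y_k\ge0\ (k\in[d]),\quad y_1+\dots+y_{d_1}\le e_1(y_{d_1+1}+\dots+y_{d_1+d_2}),\quad y_{d_1+1}+\dots+y_{d_1+d_2}\le e_2(y_1+\dots+y_{d_1}),$$ together with $y_1+\dots+y_{d_1}\le e_1$ and $y_{d_1+1}+\dots+y_{d_1+d_2}\le e_2$.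
   Context: $[m]=\{1,\dots,m\}$; $\mathbf{e}_\kappa,\mathbf{e}_\lambda$ are standard unit vectors; $\mathrm{conv}(A\cup 0)\subset\mathbb{R}^d$ is the convex hull of the columns of $A$ together with the origin. *)

From HB Require Import structures.
From mathcomp Require Import all_boot all_order all_algebra.
Set Implicit Arguments. Unset Strict Implicit. Unset Printing Implicit Defensive.
Import Order.TTheory GRing.Theory Num.Theory.
Local Open Scope ring_scope.

Section Defs.
Variable R : realFieldType.

Definition dotv n (a y : 'rV[R]_n) : R := \sum_(k < n) a 0 k * y 0 k.

Definition conv_hull (I : finType) n (f : I -> 'rV[R]_n) : 'rV[R]_n -> Prop :=
  fun y => exists w : I -> R, (forall i, 0 <= w i) /\ \sum_i w i = 1 /\
                        y = \sum_i w i *: f i.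

Definition affdim_ge n (S : 'rV[R]_n -> Prop) (k : nat) : Prop :=
  exists x : 'I_k.+1 -> 'rV[R]_n, (forall i, S (x i)) /\
    row_free (\matrix_(i < k) (x (lift ord0 i) - x ord0)).

Definition has_affdim n (S : 'rV[R]_n -> Prop) (k : nat) : Prop :=
  affdim_ge S k /\ ~ affdim_ge S k.+1.

Definition is_face n (P F : 'rV[R]_n -> Prop) : Prop :=
  exists (a : 'rV[R]_n) (b : R), (forall y, P y -> dotv a y <= b) /\
    (forall y, F y <-> (P y /\ dotv a y = b)).

Definition is_facet n (P F : 'rV[R]_n -> Prop) (dim : nat) : Prop :=
  is_face P F /\ has_affdim F dim.-1.

(* The column i e_kappa (+) j e_lambda of A, for kappa in [d1], i in [e1],
   lambda in [d2], j in [e2] (ordinals are 0-based, so i = val i' + 1). *)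
Definition Acol d1 e1 d2 e2 (c : 'I_d1 * 'I_e1 * 'I_d2 * 'I_e2) : 'rV[R]_(d1 + d2) :=
  let: (kap, i, lam, j) := c in
  \row_k (if k == lshift d2 kap then (val i).+1%:R
          else if k == rshift d1 lam then (val j).+1%:R else 0).

Definition Apts d1 e1 d2 e2 (c : option ('I_d1 * 'I_e1 * 'I_d2 * 'I_e2)) : 'rV[R]_(d1 + d2) :=
  if c is Some c' then Acol c' else 0.

Definition convA0 d1 e1 d2 e2 : 'rV[R]_(d1 + d2) -> Prop := conv_hull (@Apts d1 e1 d2 e2).

Definition ind1 d1 d2 : 'rV[R]_(d1 + d2) := \row_k (if (k < d1)%N then 1 else 0).
Definition ind2 d1 d2 : 'rV[R]_(d1 + d2) := \row_k (if (k < d1)%N then 0 else 1).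

(* The d+4 inequalities a.y <= b, indexed by 'I_(d1+d2) + 'I_4:
   inl k : -y_k <= 0
   inr 0 : (y_1+..+y_d1) - e1 (y_{d1+1}+..+y_d) <= 0
   inr 1 : (y_{d1+1}+..+y_d) - e2 (y_1+..+y_d1) <= 0
   inr 2 : y_1+..+y_d1 <= e1
   inr 3 : y_{d1+1}+..+y_d <= e2 *)
Definition ineq_normal d1 e1 d2 e2 (t : 'I_(d1 + d2) + 'I_4) : 'rV[R]_(d1 + d2) :=
  match t with
  | inl k => - (\row_l (if l == k then 1 else 0))
  | inr m => match val m with
             | 0 => ind1 d1 d2 - e1%:R *: ind2 d1 d2
             | 1 => ind2 d1 d2 - e2%:R *: ind1 d1 d2
             | 2 => ind1 d1 d2
             | _ => ind2 d1 d2
             end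
  end.

Definition ineq_rhs d1 d2 (e1 e2 : nat) (t : 'I_(d1 + d2) + 'I_4) : R :=
  match t with
  | inl _ => 0
  | inr m => match val m with
             | 0 => 0
             | 1 => 0
             | 2 => e1%:R
             | _ => e2%:R
             end
  end.

End Defs.

From HB Require Import structures.
From mathcomp Require Import all_boot all_order all_algebra.
From mathcomp Require Import zify lra.
Set Implicit Arguments. Unset Strict Implicit. Unset Printing Implicit Defensive.
Import Order.TTheory GRing.Theory Num.Theory.
Local Open Scope ring_scope.

(* Each inequality holds at the origin and at every column of A, hence on P,
   and the vertices where it is tight determine its normal up to a scalar, so
   it cuts out a face of dimension d - 1.  Conversely, let a.y <= b be valid
   with a <> 0.  If some coordinate vanishes at all vertices where a.y = b, the
   face lies in {y_k = 0}.  Otherwise, exchanging kappa (resp. lambda) in a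
   tight vertex shows that a is constant, say alpha (resp. beta), on each block
   of coordinates, so a takes the value i alpha + j beta at the column indexed
   by (kappa, i, lambda, j).  Maximizing this over [e1] x [e2] forces i = e1
   (and j = 1 when b = 0) if alpha > 0, and symmetrically if beta > 0; so the
   tight vertices lie on one of the four remaining inequalities.  A face of
   dimension d - 1 all of whose tight vertices lie on another valid hyperplane
   is cut out by it, and the d + 4 normals are pairwise non-proportional. *)

Section DotProduct.
Variables (R : realFieldType) (n : nat).
Implicit Types (a y z : 'rV[R]_n).

Lemma dotvDr a y z : dotv a (y + z) = dotv a y + dotv a z.
Proof. by rewrite /dotv -big_split; apply: eq_bigr => k _; rewrite mxE mulrDr. Qed.

Lemma dotvBr a y z : dotv a (y - z) = dotv a y - dotv a z.
Proof.
rewrite dotvDr /dotv -sumrN; congr (_ + _).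
by apply: eq_bigr => k _; rewrite mxE mulrN.
Qed.

Lemma dotvZr a y c : dotv a (c *: y) = c * dotv a y.
Proof. by rewrite /dotv mulr_sumr; apply: eq_bigr => k _; rewrite mxE mulrCA. Qed.

Lemma dotvZl a y c : dotv (c *: a) y = c * dotv a y.
Proof. by rewrite /dotv mulr_sumr; apply: eq_bigr => k _; rewrite mxE mulrA. Qed.

Lemma dotv0r a : dotv a 0 = 0.
Proof. by rewrite /dotv big1 // => k _; rewrite mxE mulr0. Qed.

Lemma dotv0l y : dotv 0 y = 0.
Proof. by rewrite /dotv big1 // => k _; rewrite mxE mul0r. Qed.

Lemma dotv_sumr (I : finType) a (F : I -> 'rV[R]_n) :
  dotv a (\sum_i F i) = \sum_i dotv a (F i).
Proof.
rewrite /dotv exchange_big /=; apply: eq_bigr => k _.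
by rewrite summxE mulr_sumr.
Qed.

Lemma sub_kermx_trP m (Y : 'M[R]_(m, n)) (v : 'rV[R]_n) :
  (v <= kermx Y^T)%MS <-> (forall i, dotv v (row i Y) = 0).
Proof.
have vYE i : (v *m Y^T) 0 i = dotv v (row i Y).
  by rewrite mxE; apply: eq_bigr => k _; rewrite !mxE.
split => [/sub_kermxP /rowP vY i | vY]; first by rewrite -vYE vY mxE.
by apply/sub_kermxP/rowP => i; rewrite vYE vY mxE.
Qed.

End DotProduct.

Section AffineDimension.
Variable R : realFieldType.

Lemma row_free_rowsub m m' n (g : 'I_m' -> 'I_m) (M : 'M[R]_(m, n)) :
  injective g -> row_free M -> row_free (rowsub g M).
Proof.
move=> g_inj freeM; apply: inj_row_free => v.
rewrite rowsubE mulmxA -(mul0mx _ M) => /(row_free_inj freeM) /rowP vg0.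
apply/rowP => i; move: (vg0 (g i)); rewrite !mxE (bigD1 i) //= !mxE eqxx mulr1.
rewrite big1 ?addr0 // => j ji.
by rewrite !mxE (inj_eq g_inj) (negbTE ji) mulr0.
Qed.

Definition diffmx n k (x : 'I_k.+1 -> 'rV[R]_n) : 'M[R]_(k, n) :=
  \matrix_(i < k) (x (lift ord0 i) - x ord0).

Lemma affdim_ge_subset n (S S' : 'rV[R]_n -> Prop) k :
  (forall y, S y -> S' y) -> affdim_ge S k -> affdim_ge S' k.
Proof. by move=> SS' [x [Sx freex]]; exists x; split => // i; apply: SS'. Qed.

(* The kernel of the rows [y i - x0] lies in [U], so these rows have rank at
   least [n - \rank U], and a maximal free subfamily of them gives the
   affinely independent points. *)
Lemma affdim_ge_orth n (S : 'rV[R]_n -> Prop) (I : finType) (x0 : 'rV[R]_n)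
    (y : I -> 'rV[R]_n) m (U : 'M[R]_(m, n)) :
  S x0 -> (forall i, S (y i)) ->
  (forall v, (forall i, dotv v (y i - x0) = 0) -> (v <= U)%MS) ->
  affdim_ge S (n - \rank U).
Proof.
move=> Sx0 Sy orthU.
pose Y := \matrix_(i < #|I|) (y (enum_val i) - x0).
have rkY : (n - \rank U <= \rank Y)%N.
  have kerU : (kermx Y^T <= U)%MS.
    apply/row_subP => i; apply: orthU => j.
    by have /sub_kermx_trP/(_ (enum_rank j)) := row_sub i (kermx Y^T);
      rewrite rowK enum_rankK.
  by have := mxrankS kerU; rewrite mxrank_ker mxrank_tr; lia.
pose g (i : 'I_(n - \rank U)) := maxrankfun Y (widen_ord rkY i).
have g_inj : injective g.
  by move=> i j /maxrankfun_inj /(congr1 val) /= /val_inj.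
pose x i := if unlift ord0 i is Some j then y (enum_val (g j)) else x0.
exists x; split=> [i|]; first by rewrite /x; case: unlift.
change (row_free (diffmx x)).
have -> : diffmx x = rowsub (widen_ord rkY) (rowsub (maxrankfun Y) Y).
  by apply/matrixP => i j; rewrite !mxE /x liftK unlift_none.
apply: row_free_rowsub (maxrowsub_free Y).
by move=> i j /(congr1 val) /= /val_inj.
Qed.

Lemma diffmx_ker n k (x : 'I_k.+1 -> 'rV[R]_n) (c : 'rV[R]_n) r :
  (forall i, dotv c (x i) = r) -> (c <= kermx (diffmx x)^T)%MS.
Proof. by move=> cx; apply/sub_kermx_trP => i; rewrite rowK dotvBr !cx subrr. Qed.

Lemma affdim_ge_hyperplane n (S : 'rV[R]_n -> Prop) k (c : 'rV[R]_n) r :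
  affdim_ge S k -> c != 0 -> (forall y, S y -> dotv c y = r) -> (k < n)%N.
Proof.
move=> [x [Sx freex]] c0 Sc.
have := mxrankS (diffmx_ker (fun i => Sc _ (Sx i))).
by rewrite mxrank_ker mxrank_tr rank_rV c0 (eqP freex); lia.
Qed.

Lemma not_affdim_ge_succ n (S : 'rV[R]_n -> Prop) : ~ affdim_ge S n.+1.
Proof.
by move=> [x [_ freex]]; have := rank_leq_col (diffmx x); rewrite (eqP freex); lia.
Qed.

Lemma row_free_kermx_colinear n (X : 'M[R]_(n.-1, n)) (a c : 'rV[R]_n) :
  row_free X -> c != 0 -> (c <= kermx X^T)%MS -> (a <= kermx X^T)%MS ->
  exists x, a = x *: c.
Proof.
move=> freeX c0 cX aX.
have n_gt0 : (0 < n)%N by have := rank_leq_col c; rewrite rank_rV c0.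
have rk1 : \rank (kermx X^T) = 1%N.
  by rewrite mxrank_ker mxrank_tr (eqP freeX); lia.
have /eqmxP cE : (c == kermx X^T)%MS.
  by rewrite -(mxrank_leqif_eq cX).2 rank_rV c0 rk1.
by apply/sub_rVP; rewrite cE.
Qed.

End AffineDimension.

Section ConvexHull.
Variables (R : realFieldType) (n : nat) (I : finType) (f : I -> 'rV[R]_n).
Local Notation P := (conv_hull f).

Lemma conv_hull_vertex i : P (f i).
Proof.
exists (fun j => (j == i)%:R); split=> [j|]; first by rewrite ler0n.
split; first by rewrite (bigD1 i) //= eqxx big1 ?addr0 // => j /negbTE ->.
rewrite (bigD1 i) //= eqxx scale1r big1 ?addr0 // => j /negbTE ->.
by rewrite scale0r.
Qed.

Lemma conv_hull_dotv y : P y -> exists w : I -> R,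
  [/\ forall i, 0 <= w i, \sum_i w i = 1 &
      forall a, dotv a y = \sum_i w i * dotv a (f i)].
Proof.
move=> [w [w_ge0 [w_sum ->]]]; exists w; split => // a.
by rewrite dotv_sumr; apply: eq_bigr => i _; rewrite dotvZr.
Qed.

Lemma conv_hull_le a b y : (forall i, dotv a (f i) <= b) -> P y -> dotv a y <= b.
Proof.
move=> fa /conv_hull_dotv [w [w_ge0 w_sum ->]].
rewrite -[b]mul1r -w_sum mulr_suml; apply: ler_sum => i _.
exact: ler_wpM2l.
Qed.

(* A convex combination attaining the maximum [b] of [a] only charges
   vertices where [a] attains [b]. *)
Lemma conv_hull_tight a b c r y :
  (forall i, dotv a (f i) <= b) -> (forall i, dotv a (f i) = b -> dotv c (f i) = r) ->
  P y -> dotv a y = b -> dotv c y = r.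
Proof.
move=> fa fac /conv_hull_dotv [w [w_ge0 w_sum yE]] ay.
have slack0 : \sum_i w i * (b - dotv a (f i)) = 0.
  under eq_bigr do rewrite mulrBr.
  by rewrite sumrB -mulr_suml w_sum mul1r -yE ay subrr.
have /psumr_eq0P w_slack : forall i, true -> 0 <= w i * (b - dotv a (f i)).
  by move=> i _; rewrite mulr_ge0 // subr_ge0.
rewrite yE -[r]mul1r -w_sum mulr_suml; apply: eq_bigr => i _.
have /eqP := w_slack slack0 i isT; rewrite mulf_eq0 subr_eq0 => /orP[/eqP -> | /eqP fi].
  by rewrite !mul0r.
by rewrite fac.
Qed.

Definition tight_spans_hyperplane (c : 'rV[R]_n) (r : R) :=
  exists i0, dotv c (f i0) = r /\
    forall v, (forall i, dotv c (f i) = r -> dotv v (f i) = dotv v (f i0)) ->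
      exists x, v = x *: c.

Lemma tight_face_has_affdim c r : c != 0 -> (forall i, dotv c (f i) <= r) ->
  tight_spans_hyperplane c r -> has_affdim (fun y => P y /\ dotv c y = r) n.-1.
Proof.
move=> c0 fc [i0 [ci0 spans]]; split; last first.
  by move=> /affdim_ge_hyperplane /(_ c0) /(_ (fun y yc => yc.2)); lia.
pose y i := if dotv c (f i) == r then f i else f i0.
have := @affdim_ge_orth R n _ I (f i0) y 1 c.
rewrite rank_rV c0 subn1; apply.
- by split; [apply: conv_hull_vertex | apply: ci0].
- by move=> i; rewrite /y; case: eqP => ci; split=> //; apply: conv_hull_vertex.
move=> v vy; apply/sub_rVP/spans => i ci.
by move: (vy i); rewrite /y ci eqxx dotvBr => /eqP; rewrite subr_eq0 => /eqP.
Qed.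

(* Two hyperplanes containing [n] affinely independent points coincide, so
   [a] is a multiple of [c]. *)
Lemma tight_face_eq a b c r : (forall i, dotv a (f i) <= b) -> c != 0 ->
  (forall i, dotv a (f i) = b -> dotv c (f i) = r) ->
  affdim_ge (fun y => P y /\ dotv a y = b) n.-1 ->
  forall y, P y /\ dotv a y = b <-> P y /\ dotv c y = r.
Proof.
move=> fa c0 fac [x [xF freex]].
have xc i : dotv c (x i) = r by have [Px xa] := xF i; apply: conv_hull_tight xa.
have xa i : dotv a (x i) = b by have [] := xF i.
have [k ak] := row_free_kermx_colinear freex c0 (diffmx_ker xc) (diffmx_ker xa).
move=> y; split=> [[Py ya] | [Py yc]]; split=> //.
  exact: conv_hull_tight ya.
by rewrite -(xa ord0) ak !dotvZl yc xc.
Qed.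

Lemma conv_hull_facetP (T : Type) (N : T -> 'rV[R]_n) (r : T -> R) :
  (0 < n)%N -> affdim_ge P n ->
  (forall t, N t != 0) -> (forall t i, dotv (N t) (f i) <= r t) ->
  (forall t, tight_spans_hyperplane (N t) (r t)) ->
  (forall a b, a != 0 -> (forall i, dotv a (f i) <= b) ->
     exists t, forall i, dotv a (f i) = b -> dotv (N t) (f i) = r t) ->
  forall F, is_facet P F n <-> exists t, forall y, F y <-> P y /\ dotv (N t) y = r t.
Proof.
move=> n_gt0 fullP N0 fN spansN coverN F; split.
  move=> [[a [b [Pa FE]]] [dimF not_dimF]].
  have fa i : dotv a (f i) <= b by apply/Pa/conv_hull_vertex.
  have a0 : a != 0.
    apply: contra_notN not_dimF => /eqP a0; rewrite prednK //.
    have [x [xF _]] := dimF; have [_ xa] := proj1 (FE _) (xF ord0).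
    apply: affdim_ge_subset fullP => y Py; apply/FE; split=> //.
    by rewrite -xa a0 !dotv0l.
  have [t ft] := coverN a b a0 fa.
  exists t => y; rewrite FE; apply: tight_face_eq => //.
  by apply: affdim_ge_subset dimF => y' /FE.
move=> [t FE]; split; first by exists (N t), (r t); split=> // y Py; apply: conv_hull_le.
have [dimT not_dimT] := tight_face_has_affdim (N0 t) (fN t) (spansN t).
split; first by apply: affdim_ge_subset dimT => y /FE.
by move=> /(affdim_ge_subset (fun y => proj1 (FE y))).
Qed.

End ConvexHull.

Lemma grid_max_tight (R : realFieldType) e e' (al be b : R) (i : 'I_e) (j : 'I_e') :
  0 < al -> (forall (i' : 'I_e) (j' : 'I_e'), i'.+1%:R * al + j'.+1%:R * be <= b) ->
  i.+1%:R * al + j.+1%:R * be = b -> i.+1 = e /\ (b = 0 -> j = 0 :> nat).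
Proof.
move=> al_gt0 le_b ij_b; split.
  case: (ltnP i.+1 e) => [lt_ie|]; last by have := ltn_ord i; lia.
  by have := le_b (Ordinal lt_ie) j; rewrite -ij_b /= lerD2r ler_pM2r // ler_nat ltnn.
move=> b0; case: (posnP j) => // j_gt0; exfalso.
have lt_je : (j.-1 < e')%N by have := ltn_ord j; lia.
have := le_b i (Ordinal lt_je); rewrite /= prednK //.
move: ij_b; rewrite b0 -nat1r mulrDl mul1r => ij_0 le_0.
have i_al : 0 < i.+1%:R * al by rewrite mulr_gt0 ?ltr0Sn.
have be_ge0 : 0 <= be by lra.
have : 0 <= j%:R * be by rewrite mulr_ge0 ?ler0n.
lra.
Qed.

Section Polytope.
Variable R : realFieldType.
Variables d1 d2 e1 e2 : nat.
Hypotheses (hd1 : (2 <= d1)%N) (hd2 : (2 <= d2)%N).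
Hypotheses (he1 : (2 <= e1)%N) (he2 : (2 <= e2)%N).

Local Notation n := (d1 + d2)%N.
Local Notation lsh := (lshift d2).
Local Notation rsh := (@rshift d1 d2).
Local Notation Acol := (@Acol R d1 e1 d2 e2).
Local Notation pt := (@Apts R d1 e1 d2 e2).
Local Notation P := (@convA0 R d1 e1 d2 e2).
Local Notation N := (@ineq_normal R d1 e1 d2 e2).
Local Notation r := (@ineq_rhs R d1 d2 e1 e2).

Definition ratio1 : 'I_4 := @Ordinal 4 0 isT.
Definition ratio2 : 'I_4 := @Ordinal 4 1 isT.
Definition bound1 : 'I_4 := @Ordinal 4 2 isT.
Definition bound2 : 'I_4 := @Ordinal 4 3 isT.

Variant ineq_spec : 'I_n + 'I_4 -> Type :=
  | IneqL k : ineq_spec (inl (lsh k))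
  | IneqR k : ineq_spec (inl (rsh k))
  | IneqRatio1 : ineq_spec (inr ratio1)
  | IneqRatio2 : ineq_spec (inr ratio2)
  | IneqBound1 : ineq_spec (inr bound1)
  | IneqBound2 : ineq_spec (inr bound2).

Lemma ineqP t : ineq_spec t.
Proof.
case: t => [k | [[|[|[|[|m]]]] hm] //].
- case: (splitP k) => j kj.
    have -> : k = lsh j by apply: val_inj.
    exact: IneqL.
  have -> : k = rsh j by apply: val_inj.
  exact: IneqR.
- by rewrite (bool_irrelevance hm isT); apply: IneqRatio1.
- by rewrite (bool_irrelevance hm isT); apply: IneqRatio2.
- by rewrite (bool_irrelevance hm isT); apply: IneqBound1.
- by rewrite (bool_irrelevance hm isT); apply: IneqBound2.
Qed.

Lemma exists_ord_neq m (hm : (1 < m)%N) (k : 'I_m) : exists k' : 'I_m, k' != k.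
Proof.
have [->|k_neq0] := eqVneq k (Ordinal (ltnW hm)); first by exists (Ordinal hm).
by exists (Ordinal (ltnW hm)); rewrite eq_sym.
Qed.

Definition k0 : 'I_d1 := Ordinal (ltnW hd1).
Definition k1 : 'I_d1 := Ordinal hd1.
Definition l0 : 'I_d2 := Ordinal (ltnW hd2).
Definition l1 : 'I_d2 := Ordinal hd2.
Definition i0 : 'I_e1 := Ordinal (ltnW he1).
Definition i1 : 'I_e1 := Ordinal he1.
Definition j0 : 'I_e2 := Ordinal (ltnW he2).
Definition j1 : 'I_e2 := Ordinal he2.
Definition imax : 'I_e1 := Ordinal (etrans (ltn_predL e1) (ltnW he1)).
Definition jmax : 'I_e2 := Ordinal (etrans (ltn_predL e2) (ltnW he2)).

Lemma imaxE : (imax : nat).+1 = e1. Proof. by rewrite /= prednK // ltnW. Qed.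
Lemma jmaxE : (jmax : nat).+1 = e2. Proof. by rewrite /= prednK // ltnW. Qed.

Lemma e1_neq0 : e1%:R != 0 :> R. Proof. by rewrite pnatr_eq0; lia. Qed.
Lemma e2_neq0 : e2%:R != 0 :> R. Proof. by rewrite pnatr_eq0; lia. Qed.

Lemma row_lrP (v w : 'rV[R]_n) : (forall k, v 0 (lsh k) = w 0 (lsh k)) ->
  (forall k, v 0 (rsh k) = w 0 (rsh k)) -> v = w.
Proof.
move=> vwl vwr; apply/rowP => k; case: (splitP k) => j kj.
  by have -> : k = lsh j by apply: val_inj.
by have -> : k = rsh j by apply: val_inj.
Qed.

Lemma Acol_lsh ka i la j k :
  Acol (ka, i, la, j) 0 (lsh k) = if k == ka then i.+1%:R else 0.
Proof. by rewrite mxE !eq_shift. Qed.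

Lemma Acol_rsh ka i la j k :
  Acol (ka, i, la, j) 0 (rsh k) = if k == la then j.+1%:R else 0.
Proof. by rewrite mxE !eq_shift. Qed.

Lemma Acol_ge0 c k : 0 <= Acol c 0 k :> R.
Proof.
case: c => [[[ka i] la] j]; rewrite mxE.
by case: ifP => _; [|case: ifP => _]; rewrite ?ler0n.
Qed.

Lemma dotv_Acol (v : 'rV[R]_n) ka i la j :
  dotv v (Acol (ka, i, la, j)) = i.+1%:R * v 0 (lsh ka) + j.+1%:R * v 0 (rsh la).
Proof.
rewrite /dotv big_split_ord; congr (_ + _).
  rewrite (bigD1 ka) // big1 => [|k /negbTE kka]; last by rewrite Acol_lsh kka mulr0.
  by rewrite Acol_lsh eqxx /= addr0 mulrC.
rewrite (bigD1 la) // big1 => [|k /negbTE kla]; last by rewrite Acol_rsh kla mulr0.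
by rewrite Acol_rsh eqxx /= addr0 mulrC.
Qed.

Lemma Apts_Some c : pt (Some c) = Acol c. Proof. by []. Qed.
Lemma Apts_None : pt None = 0. Proof. by []. Qed.

Definition blockv (al be : R) : 'rV[R]_n := al *: ind1 R d1 d2 + be *: ind2 R d1 d2.

Lemma blockv_lsh al be k : blockv al be 0 (lsh k) = al.
Proof. by rewrite !mxE /= ltn_ord mulr1 mulr0 addr0. Qed.

Lemma blockv_rsh al be k : blockv al be 0 (rsh k) = be.
Proof. by rewrite !mxE /= ltnNge leq_addr /= mulr1 mulr0 add0r. Qed.

Lemma blockvP (v : 'rV[R]_n) al be : (forall k, v 0 (lsh k) = al) ->
  (forall k, v 0 (rsh k) = be) -> v = blockv al be.
Proof. by move=> vl vr; apply: row_lrP => k; rewrite ?blockv_lsh ?blockv_rsh. Qed.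

Lemma scale_blockv x al be : x *: blockv al be = blockv (x * al) (x * be).
Proof. by apply: blockvP => k; rewrite mxE ?blockv_lsh ?blockv_rsh. Qed.

Lemma dotv_blockv_Acol al be ka i la j :
  dotv (blockv al be) (Acol (ka, i, la, j)) = i.+1%:R * al + j.+1%:R * be.
Proof. by rewrite dotv_Acol blockv_lsh blockv_rsh. Qed.

Lemma normal_ratio1 : N (inr ratio1) = blockv 1 (- e1%:R).
Proof. by rewrite /= /blockv scale1r scaleNr. Qed.

Lemma normal_ratio2 : N (inr ratio2) = blockv (- e2%:R) 1.
Proof. by rewrite /= /blockv scale1r scaleNr addrC. Qed.

Lemma normal_bound1 : N (inr bound1) = blockv 1 0.
Proof. by rewrite /= /blockv scale1r scale0r addr0. Qed.

Lemma normal_bound2 : N (inr bound2) = blockv 0 1.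
Proof. by rewrite /= /blockv scale1r scale0r add0r. Qed.

Lemma normal_inl_coord k k' : N (inl k) 0 k' = if k' == k then -1 else 0.
Proof. by rewrite !mxE; case: eqP; rewrite ?oppr0. Qed.

Lemma dotv_normal_inl k (y : 'rV[R]_n) : dotv (N (inl k)) y = - y 0 k.
Proof.
rewrite /dotv (bigD1 k) //= normal_inl_coord eqxx mulN1r big1 ?addr0 // => k' /negbTE k'k.
by rewrite normal_inl_coord k'k mul0r.
Qed.

Lemma ineq_rhs_ge0 t : 0 <= r t.
Proof. by case: (ineqP t) => * /=; rewrite ?ler0n. Qed.

Lemma ineq_valid_vertex t q : dotv (N t) (pt q) <= r t.
Proof.
case: q => [[[[ka i] la] j]|]; last by rewrite Apts_None dotv0r ineq_rhs_ge0.
rewrite Apts_Some.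
case: (ineqP t) => [k|k||||]; rewrite ?dotv_normal_inl ?oppr_le0 ?Acol_ge0 //.
- rewrite normal_ratio1 dotv_blockv_Acol /= mulr1 mulrN subr_le0 -natrM ler_nat.
  by have := ltn_ord i; nia.
- rewrite normal_ratio2 dotv_blockv_Acol /= mulr1 mulrN addrC subr_le0 -natrM ler_nat.
  by have := ltn_ord j; nia.
- by rewrite normal_bound1 dotv_blockv_Acol /= mulr1 mulr0 addr0 ler_nat.
- by rewrite normal_bound2 dotv_blockv_Acol /= mulr1 mulr0 add0r ler_nat.
Qed.

Lemma ineq_normal_neq0 t : N t != 0.
Proof.
have coord_neq0 (v : 'rV[R]_n) k : v 0 k != 0 -> v != 0.
  by apply: contraNneq => ->; rewrite mxE.
case: (ineqP t) => [k|k||||];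
  rewrite ?normal_ratio1 ?normal_ratio2 ?normal_bound1 ?normal_bound2.
- by apply: (coord_neq0 _ (lsh k)); rewrite normal_inl_coord eqxx oppr_eq0 oner_eq0.
- by apply: (coord_neq0 _ (rsh k)); rewrite normal_inl_coord eqxx oppr_eq0 oner_eq0.
- by apply: (coord_neq0 _ (lsh k0)); rewrite blockv_lsh oner_eq0.
- by apply: (coord_neq0 _ (rsh l0)); rewrite blockv_rsh oner_eq0.
- by apply: (coord_neq0 _ (lsh k0)); rewrite blockv_lsh oner_eq0.
- by apply: (coord_neq0 _ (rsh l0)); rewrite blockv_rsh oner_eq0.
Qed.

Lemma coord_lsh_eq0 (v : 'rV[R]_n) ka la j x :
  (forall i, dotv v (Acol (ka, i, la, j)) = x) -> v 0 (lsh ka) = 0.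
Proof. by move=> vx; move: (vx i0) (vx i1); rewrite !dotv_Acol /=; lra. Qed.

Lemma coord_rsh_eq0 (v : 'rV[R]_n) ka i la x :
  (forall j, dotv v (Acol (ka, i, la, j)) = x) -> v 0 (rsh la) = 0.
Proof. by move=> vx; move: (vx j0) (vx j1); rewrite !dotv_Acol /=; lra. Qed.

Lemma affdim_ge_convA0 : affdim_ge P n.
Proof.
have := affdim_ge_orth (U := 0 : 'M_n) (conv_hull_vertex pt None) (conv_hull_vertex pt).
rewrite mxrank0 subn0; apply=> v v_orth; rewrite submx0; apply/eqP.
have vA ka i la j : dotv v (Acol (ka, i, la, j)) = 0.
  by have := v_orth (Some (ka, i, la, j)); rewrite Apts_None subr0.
apply: row_lrP => k; rewrite mxE.
  by apply: (@coord_lsh_eq0 _ _ l0 j0 0) => i; apply: vA.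
by apply: (@coord_rsh_eq0 _ k0 i0 _ 0) => j; apply: vA.
Qed.

Local Notation spans t := (tight_spans_hyperplane pt (N t) (r t)).

Lemma spans_lsh ks : spans (inl (lsh ks)).
Proof.
exists None; split=> [|v v_const]; first by rewrite Apts_None dotv0r.
have vA ka i la j : ka != ks -> dotv v (Acol (ka, i, la, j)) = 0.
  move=> kaks; rewrite -(dotv0r v) -Apts_None -Apts_Some; apply: v_const.
  by rewrite Apts_Some dotv_normal_inl Acol_lsh eq_sym (negbTE kaks) oppr0.
have [ko kos] := exists_ord_neq hd1 ks.
have vr la : v 0 (rsh la) = 0 by apply: (@coord_rsh_eq0 _ ko i0 _ 0) => j; apply: vA.
exists (- v 0 (lsh ks)); apply: row_lrP => k; rewrite mxE normal_inl_coord.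
  rewrite eq_shift; have [-> | kks] := eqVneq k ks; first by rewrite mulrN1 opprK.
  by rewrite mulr0; apply: (@coord_lsh_eq0 _ _ l0 j0 0) => i; apply: vA.
by rewrite eq_shift mulr0 vr.
Qed.

Lemma spans_rsh ls : spans (inl (rsh ls)).
Proof.
exists None; split=> [|v v_const]; first by rewrite Apts_None dotv0r.
have vA ka i la j : la != ls -> dotv v (Acol (ka, i, la, j)) = 0.
  move=> lals; rewrite -(dotv0r v) -Apts_None -Apts_Some; apply: v_const.
  by rewrite Apts_Some dotv_normal_inl Acol_rsh eq_sym (negbTE lals) oppr0.
have [lo los] := exists_ord_neq hd2 ls.
have vl ka : v 0 (lsh ka) = 0 by apply: (@coord_lsh_eq0 _ _ lo j0 0) => i; apply: vA.
exists (- v 0 (rsh ls)); apply: row_lrP => k; rewrite mxE normal_inl_coord.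
  by rewrite eq_shift mulr0 vl.
rewrite eq_shift; have [-> | lls] := eqVneq k ls; first by rewrite mulrN1 opprK.
by rewrite mulr0; apply: (@coord_rsh_eq0 _ k0 i0 _ 0) => j; apply: vA.
Qed.

Lemma spans_ratio1 : spans (inr ratio1).
Proof.
exists None; split=> [|v v_const]; first by rewrite Apts_None dotv0r.
have vA ka la : e1%:R * v 0 (lsh ka) + v 0 (rsh la) = 0.
  have tight : dotv (N (inr ratio1)) (pt (Some (ka, imax, la, j0))) = r (inr ratio1).
    by rewrite Apts_Some normal_ratio1 dotv_blockv_Acol imaxE /=; lra.
  by have := v_const _ tight; rewrite Apts_Some Apts_None dotv0r dotv_Acol imaxE /=; lra.
exists (v 0 (lsh k0)); rewrite normal_ratio1 scale_blockv mulr1.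
apply: blockvP => k; last by have := vA k0 k; lra.
by apply: (mulfI e1_neq0); have := vA k l0; have := vA k0 l0; lra.
Qed.

Lemma spans_ratio2 : spans (inr ratio2).
Proof.
exists None; split=> [|v v_const]; first by rewrite Apts_None dotv0r.
have vA ka la : v 0 (lsh ka) + e2%:R * v 0 (rsh la) = 0.
  have tight : dotv (N (inr ratio2)) (pt (Some (ka, i0, la, jmax))) = r (inr ratio2).
    by rewrite Apts_Some normal_ratio2 dotv_blockv_Acol jmaxE /=; lra.
  by have := v_const _ tight; rewrite Apts_Some Apts_None dotv0r dotv_Acol jmaxE /=; lra.
exists (v 0 (rsh l0)); rewrite normal_ratio2 scale_blockv mulr1.
apply: blockvP => k; first by have := vA k l0; lra.
by apply: (mulfI e2_neq0); have := vA k0 k; have := vA k0 l0; lra.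
Qed.

Lemma spans_bound1 : spans (inr bound1).
Proof.
have tight ka la j : dotv (N (inr bound1)) (pt (Some (ka, imax, la, j))) = r (inr bound1).
  by rewrite Apts_Some normal_bound1 dotv_blockv_Acol imaxE mulr1 mulr0 addr0.
exists (Some (k0, imax, l0, j0)); split=> [|v v_const]; first exact: tight.
have vA ka la j : dotv v (Acol (ka, imax, la, j)) = dotv v (Acol (k0, imax, l0, j0)).
  exact: v_const (Some _) (tight ka la j).
have vr la : v 0 (rsh la) = 0 by apply: (@coord_rsh_eq0 _ k0 imax) => j; apply: vA.
exists (v 0 (lsh k0)); rewrite normal_bound1 scale_blockv mulr1 mulr0.
apply: blockvP => k; last exact: vr.
by apply: (mulfI e1_neq0); have := vA k l0 j0; rewrite !dotv_Acol imaxE !vr; lra.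
Qed.

Lemma spans_bound2 : spans (inr bound2).
Proof.
have tight ka i la : dotv (N (inr bound2)) (pt (Some (ka, i, la, jmax))) = r (inr bound2).
  by rewrite Apts_Some normal_bound2 dotv_blockv_Acol jmaxE mulr1 mulr0 add0r.
exists (Some (k0, i0, l0, jmax)); split=> [|v v_const]; first exact: tight.
have vA ka i la : dotv v (Acol (ka, i, la, jmax)) = dotv v (Acol (k0, i0, l0, jmax)).
  exact: v_const (Some _) (tight ka i la).
have vl ka : v 0 (lsh ka) = 0 by apply: (@coord_lsh_eq0 _ _ l0 jmax) => i; apply: vA.
exists (v 0 (rsh l0)); rewrite normal_bound2 scale_blockv mulr1 mulr0.
apply: blockvP => k; first exact: vl.
by apply: (mulfI e2_neq0); have := vA k0 i0 k; rewrite !dotv_Acol jmaxE !vl; lra.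
Qed.

Lemma ineq_spans t : spans t.
Proof.
case: (ineqP t) => [k|k||||];
  [exact: spans_lsh | exact: spans_rsh | exact: spans_ratio1 |
   exact: spans_ratio2 | exact: spans_bound1 | exact: spans_bound2].
Qed.

Lemma tight_swap_lsh (a : 'rV[R]_n) b q ka kb : (forall q, dotv a (pt q) <= b) ->
  dotv a (pt q) = b -> pt q 0 (lsh ka) != 0 -> a 0 (lsh kb) <= a 0 (lsh ka).
Proof.
move=> le_b; case: q => [[[[ka' i] la] j]|]; last by rewrite Apts_None mxE eqxx.
rewrite Apts_Some Acol_lsh; have [-> q_b _ | _ _] := eqVneq ka ka'; last by rewrite eqxx.
have := le_b (Some (kb, i, la, j)); rewrite -q_b !Apts_Some !dotv_Acol lerD2r.
by rewrite ler_pM2l // ltr0Sn.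
Qed.

Lemma tight_swap_rsh (a : 'rV[R]_n) b q la lb : (forall q, dotv a (pt q) <= b) ->
  dotv a (pt q) = b -> pt q 0 (rsh la) != 0 -> a 0 (rsh lb) <= a 0 (rsh la).
Proof.
move=> le_b; case: q => [[[[ka i] la'] j]|]; last by rewrite Apts_None mxE eqxx.
rewrite Apts_Some Acol_rsh; have [-> q_b _ | _ _] := eqVneq la la'; last by rewrite eqxx.
have := le_b (Some (ka, i, lb, j)); rewrite -q_b !Apts_Some !dotv_Acol lerD2l.
by rewrite ler_pM2l // ltr0Sn.
Qed.

Lemma blockv_tight_sub al be b : blockv al be != 0 ->
  (forall q, dotv (blockv al be) (pt q) <= b) ->
  (exists c, dotv (blockv al be) (pt (Some c)) = b) ->
  exists t, forall q, dotv (blockv al be) (pt q) = b -> dotv (N t) (pt q) = r t.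
Proof.
move=> nz le_b [[[[ka i] la] j] ij_b].
have le_b' (i' : 'I_e1) (j' : 'I_e2) : i'.+1%:R * al + j'.+1%:R * be <= b.
  by move: (le_b (Some (k0, i', l0, j'))); rewrite Apts_Some dotv_blockv_Acol.
rewrite Apts_Some dotv_blockv_Acol in ij_b.
have [al_gt0 | al_le0] := ltrP 0 al.
  exists (inr (if b == 0 then ratio1 else bound1)) => -[[[[ka' i'] la'] j']|]; last first.
    by rewrite Apts_None !dotv0r => <-; rewrite eqxx.
  rewrite Apts_Some dotv_blockv_Acol => tight.
  have [i'E j'0] := grid_max_tight al_gt0 le_b' tight.
  case: eqP => [b0|_].
    by rewrite normal_ratio1 dotv_blockv_Acol i'E j'0 //=; lra.
  by rewrite normal_bound1 dotv_blockv_Acol i'E /=; lra.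
have [be_gt0 | be_le0] := ltrP 0 be.
  have le_b'' (j' : 'I_e2) (i' : 'I_e1) : j'.+1%:R * be + i'.+1%:R * al <= b.
    by rewrite addrC.
  exists (inr (if b == 0 then ratio2 else bound2)) => -[[[[ka' i'] la'] j']|]; last first.
    by rewrite Apts_None !dotv0r => <-; rewrite eqxx.
  rewrite Apts_Some dotv_blockv_Acol addrC => tight.
  have [j'E i'0] := grid_max_tight be_gt0 le_b'' tight.
  case: eqP => [b0|_].
    by rewrite normal_ratio2 dotv_blockv_Acol j'E i'0 //=; lra.
  by rewrite normal_bound2 dotv_blockv_Acol j'E /=; lra.
have b_ge0 : 0 <= b by move: (le_b None); rewrite Apts_None dotv0r.
have i_al : i.+1%:R * al <= 0 by rewrite mulr_ge0_le0.
have j_be : j.+1%:R * be <= 0 by rewrite mulr_ge0_le0.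
have al0 : al = 0 by apply: (mulfI (lt0r_neq0 (ltr0Sn R i))); rewrite mulr0; lra.
have be0 : be = 0 by apply: (mulfI (lt0r_neq0 (ltr0Sn R j))); rewrite mulr0; lra.
by move: nz; rewrite al0 be0 /blockv !scale0r addr0 eqxx.
Qed.

Lemma valid_tight_sub (a : 'rV[R]_n) b : a != 0 -> (forall q, dotv a (pt q) <= b) ->
  exists t, forall q, dotv a (pt q) = b -> dotv (N t) (pt q) = r t.
Proof.
move=> a0 le_b.
case: (boolP [exists k, [forall q, (dotv a (pt q) == b) ==> (pt q 0 k == 0)]]).
  move=> /existsP [k /forallP zk]; exists (inl k) => q /eqP q_b.
  by rewrite dotv_normal_inl (eqP (implyP (zk q) q_b)) oppr0.
rewrite negb_exists => /forallP nz_k.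
have supp k : exists2 q, dotv a (pt q) = b & pt q 0 k != 0.
  move: (nz_k k); rewrite negb_forall => /existsP [q].
  by rewrite negb_imply => /andP [/eqP q_b qk]; exists q.
have le_l ka kb : a 0 (lsh kb) <= a 0 (lsh ka).
  by have [q q_b qk] := supp (lsh ka); apply: tight_swap_lsh qk.
have le_r la lb : a 0 (rsh lb) <= a 0 (rsh la).
  by have [q q_b qk] := supp (rsh la); apply: tight_swap_rsh qk.
have witness : exists c, dotv a (pt (Some c)) = b.
  by have [[c|] q_b] := supp (lsh k0); [exists c | rewrite Apts_None mxE eqxx].
have aE : a = blockv (a 0 (lsh k0)) (a 0 (rsh l0)).
  by apply: blockvP => k; apply/eqP; rewrite eq_le ?le_l ?le_r.
by move: a0 le_b witness; rewrite aE; apply: blockv_tight_sub.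
Qed.

Definition ineq_of_normal (v : 'rV[R]_n) : 'I_n + 'I_4 :=
  if (v 0 (lsh k0) != 0) && (v 0 (rsh l0) != 0) then
    inr (if v 0 (rsh l0) == - e1%:R * v 0 (lsh k0) then ratio1 else ratio2)
  else if (v 0 (lsh k0) != 0) && (v 0 (lsh k1) != 0) then inr bound1
  else if (v 0 (rsh l0) != 0) && (v 0 (rsh l1) != 0) then inr bound2
  else inl (odflt (lsh k0) [pick k | v 0 k != 0]).

Lemma ineq_of_normalZ (v : 'rV[R]_n) c :
  c != 0 -> ineq_of_normal (c *: v) = ineq_of_normal v.
Proof.
move=> c0; have cv_neq0 k : ((c *: v) 0 k != 0) = (v 0 k != 0).
  by rewrite mxE mulf_eq0 negb_or c0.
by rewrite /ineq_of_normal !cv_neq0 (eq_pick cv_neq0) !mxE mulrCA (inj_eq (mulfI c0)).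
Qed.

Lemma ineq_of_normal_inl k : ineq_of_normal (N (inl k)) = inl k.
Proof.
have Nk k' : (N (inl k) 0 k' != 0) = (k' == k).
  by rewrite normal_inl_coord; case: (eqVneq k' k); rewrite ?oppr_eq0 ?oner_eq0 ?eqxx.
rewrite /ineq_of_normal !Nk (eq_pick Nk).
have -> : (lsh k0 == k) && (rsh l0 == k) = false by case: eqP => // <-; rewrite eq_shift.
have -> : (lsh k0 == k) && (lsh k1 == k) = false by case: eqP => // <-; rewrite eq_shift.
have -> : (rsh l0 == k) && (rsh l1 == k) = false by case: eqP => // <-; rewrite eq_shift.
by case: pickP => [k' /eqP -> | /(_ k)]; rewrite ?eqxx.
Qed.

Lemma ineq_of_normalK t : ineq_of_normal (N t) = t.
Proof.
case: (ineqP t) => [k|k||||]; try exact: ineq_of_normal_inl;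
  rewrite ?normal_ratio1 ?normal_ratio2 ?normal_bound1 ?normal_bound2 /ineq_of_normal;
  rewrite !blockv_lsh !blockv_rsh ?oppr_eq0 ?oner_eq0 ?e1_neq0 ?e2_neq0 ?eqxx //=.
- by rewrite mulr1 eqxx.
- rewrite mulrNN -natrM eq_sym pnatr_eq1 ifN //; apply/eqP; nia.
Qed.

Lemma ineq_tight_inj t t' :
  (forall y, P y /\ dotv (N t) y = r t <-> P y /\ dotv (N t') y = r t') -> t = t'.
Proof.
move=> tt'; have [q0 [tq0 spans_t]] := ineq_spans t.
have tight_t' q : dotv (N t) (pt q) = r t -> dotv (N t') (pt q) = r t'.
  by move=> tq; have [] := (tt' (pt q)).1 (conj (conv_hull_vertex pt q) tq).
have [c Nt'E] : exists c, N t' = c *: N t.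
  by apply: spans_t => q tq; rewrite !tight_t'.
have c0 : c != 0.
  by apply: contraNneq (ineq_normal_neq0 t') => c0; rewrite Nt'E c0 scale0r.
by rewrite -(ineq_of_normalK t') Nt'E ineq_of_normalZ // ineq_of_normalK.
Qed.

End Polytope.

Theorem proposition4p2 (R : realFieldType) (d1 d2 e1 e2 : nat)
  (hd1 : (2 <= d1)%N) (hd2 : (2 <= d2)%N) (he1 : (2 <= e1)%N) (he2 : (2 <= e2)%N) :
  let P := @convA0 R d1 e1 d2 e2 in
  let tight := fun (t : 'I_(d1 + d2) + 'I_4) (y : 'rV[R]_(d1 + d2)) =>
      P y /\ dotv (@ineq_normal R d1 e1 d2 e2 t) y = @ineq_rhs R d1 d2 e1 e2 t in
  [/\ has_affdim P (d1 + d2),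
      (forall t y, P y -> dotv (@ineq_normal R d1 e1 d2 e2 t) y <= @ineq_rhs R d1 d2 e1 e2 t),
      (forall F : 'rV[R]_(d1 + d2) -> Prop,
         is_facet P F (d1 + d2) <-> exists t, forall y, F y <-> tight t y) &
      (forall t t', (forall y, tight t y <-> tight t' y) -> t = t')].
Proof.
move=> P tight.
have full : affdim_ge P (d1 + d2) by apply: affdim_ge_convA0.
split.
- by split; [exact: full | exact: not_affdim_ge_succ].
- by move=> t y; apply: conv_hull_le => q; apply: ineq_valid_vertex.
- apply: conv_hull_facetP => //; first by lia.
  + by move=> t; apply: ineq_normal_neq0.
  + by move=> t; apply: ineq_valid_vertex.
  + by move=> t; apply: ineq_spans.
  + by move=> a b; apply: valid_tight_sub.
- by move=> t t'; apply: ineq_tight_inj.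
Qed.
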